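(* Let $G$ be a finitely presented group with finite presentation $\mathcal{P}=\langle \mathcal{S}\mid\mathcal{W}\rangle$ whose Dehn function $f_G$ is polynomial (bounded above by a polynomial), and let $L^{st}_G$ be the standard word-length function on $G$ associated with the generating set $\mathcal{S}$. Then the map $$\alpha_2(G,L^{st}_G): H_2(G;\mathbb{Q})\to (H^2(G;\mathbb{Q}))^*\to (PH^2(G;\mathbb{Q}))^*$$ is an isomorphism.
   Context: Let $F$ be the free group on $\mathcal{S}$ with standard word-length $L_F$ (each generator has length $1$), and $F'\subset F$ the normal closure of $\mathcal{W}$, so $G=F/F'$. $L^{st}_G(g)=\min\{L_F(w): w\mapsto g\}$. For $y\in F'$, $\mathrm{Area}_{\mathcal{P}}(y)$ is the minimal $n$ such that $y=\bar w_1^{x_1}\cdots \bar w_n^{x_n}$ with $w_i^{\pm1}\in\mathcal{W}$, $x_i\in F$, $\bar w^x=x\bar w x^{-1}$. The Dehn function $f_{\mathcal P}:\mathbb{N}\to\mathbb{N}$ is the minimal function with $\mathrm{Area}_{\mathcal P}(y)\le f_{\mathcal P}(n)$ for all $y\in F'$ with $L_F(y)\le n$. p-bounded cohomology: for a group $G$ with word-length function $L$, $PH^*(G;\mathbb{Q})$ is the cohomology of the subcomplex of the (non-homogeneous) bar cochain complex $\mathrm{Hom}_G(C_*(EG;\mathbb{Q}),\mathbb{Q})$ consisting of cochains of polynomial growth, i.e. $G$-equivariant linear $\phi$ on $C_n(EG;\mathbb Q)=\mathbb{Q}[G][\{(1,g_1,\dots,g_n)\}]$ such that $|\phi(1,g_1,\dots,g_n)|\le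 C(1+\sum_i L(g_i))^k$ for some constants $C,k$. The inclusion of cochain complexes induces $PH^*(G;\mathbb Q)\to H^*(G;\mathbb Q)$; its dual composed with the universal-coefficient map $H_*(G;\mathbb Q)\to (H^*(G;\mathbb Q))^*$ is $\alpha_*(G,L)$. *)

From mathcomp Require Import all_boot all_order all_algebra all_fingroup.
Set Implicit Arguments. Unset Strict Implicit. Unset Printing Implicit Defensive.
Import Order.TTheory GRing.Theory Num.Theory.

(* A letter is (s, b) with b = true meaning s^{-1}.                         *)
Section FreeGroup.
Variable S : finType.

Definition letter := (S * bool)%type.
Definition word := seq letter.

Definition winv (w : word) : word := rev [seq (a.1, ~~ a.2) | a <- w].

Fixpoint fred (w : word) : word :=
  match w with
  | [::] => [::]
  | a :: w' =>
      match fred w' with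
      | b :: r' => if (a.1 == b.1) && (a.2 != b.2) then r' else a :: b :: r'
      | [::] => [:: a]
      end
  end.

Definition LF (w : word) : nat := size (fred w).

(* Area_P(y) <= N : y is equal in F to a product of at most N conjugates
   x r x^{-1} with r^{+-1} in W. *)
Definition area_le (W : seq word) (y : word) (N : nat) : Prop :=
  exists l : seq (word * word),
    [/\ size l <= N,
        all (fun p => (p.2 \in W) || (winv p.2 \in W)) l &
        fred (flatten [seq p.1 ++ p.2 ++ winv p.1 | p <- l]) = fred y].

(* y lies in F' = normal closure of W *)
Definition in_relators (W : seq word) (y : word) : Prop := exists N, area_le W y N.

(* The Dehn function f_P is bounded above by a polynomial:
   f_P(n) <= C (n+1)^k for all n, i.e. every y in F' with L_F(y) <= n
   has Area_P(y) <= C (n+1)^k. *)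
Definition dehn_poly_bounded (W : seq word) : Prop :=
  exists C k : nat, forall (n : nat) (y : word),
    in_relators W y -> LF y <= n -> area_le W y (C * (n.+1) ^ k).
End FreeGroup.

Local Open Scope group_scope.

Section Presentation.
Variables (S : finType) (G : groupType) (gen : S -> G).

Definition evalw (w : word S) : G :=
  foldr (fun a acc => (if a.2 then (gen a.1)^-1 else gen a.1) * acc) 1 w.

(* <S | W> is a presentation of G via gen: F -> G is onto, with kernel the
   normal closure F' of W; hence G = F / F'. *)
Definition presents (W : seq (word S)) : Prop :=
  (forall g : G, exists w, evalw w = g) /\
  (forall w, evalw w = 1 <-> in_relators W w).

Definition is_std_length (L : G -> nat) : Prop :=
  forall g : G,
    (exists w, evalw w = g /\ LF w = L g) /\
    (forall w, evalw w = g -> L g <= LF w).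
End Presentation.

(* Inhomogeneous bar complex of G with trivial Q coefficients, degrees <= 3. *)
Section Bar.
Variable G : groupType.
Local Open Scope ring_scope.

Definition chain1 := seq (G * rat).
Definition chain2 := seq ((G * G) * rat).
Definition chain3 := seq ((G * G * G) * rat).

Definition coef1 (c : chain1) (g : G) : rat := \sum_(p <- c | p.1 == g) p.2.
Definition coef2 (c : chain2) (x : G * G) : rat := \sum_(p <- c | p.1 == x) p.2.

Definition bnd2 (c : chain2) : chain1 :=
  flatten [seq [:: (p.1.2, p.2); ((p.1.1 * p.1.2)%g, - p.2); (p.1.1, p.2)] | p <- c].

Definition bnd3 (c : chain3) : chain2 :=
  flatten [seq let: (g, h, k) := p.1 in
               [:: ((h, k), p.2); (((g * h)%g, k), - p.2);
                   ((g, (h * k)%g), p.2); ((g, h), - p.2)] | p <- c].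

Definition is_cycle2 (c : chain2) : Prop := forall g, coef1 (bnd2 c) g = 0.
Definition is_boundary2 (c : chain2) : Prop :=
  exists d : chain3, forall x, coef2 (bnd3 d) x = coef2 c x.

(* cochains: G-equivariant cochains on EG = functions on G^n *)
Definition cobnd1 (psi : G -> rat) : G -> G -> rat :=
  fun g h => psi h - psi (g * h)%g + psi g.
Definition is_cocycle2 (phi : G -> G -> rat) : Prop :=
  forall g h k, phi h k - phi (g * h)%g k + phi g (h * k)%g - phi g h = 0.

Definition pgrowth1 (L : G -> nat) (psi : G -> rat) : Prop :=
  exists (C : rat) (k : nat), forall g, `|psi g| <= C * (1 + (L g)%:R) ^+ k.
Definition pgrowth2 (L : G -> nat) (phi : G -> G -> rat) : Prop :=
  exists (C : rat) (k : nat), forall g h,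
    `|phi g h| <= C * (1 + (L g + L h)%:R) ^+ k.

Definition pcocycle2 L phi := pgrowth2 L phi /\ is_cocycle2 phi.
Definition pcoboundary2 L (phi : G -> G -> rat) : Prop :=
  exists psi, pgrowth1 L psi /\ forall g h, phi g h = cobnd1 psi g h.

Definition pair2 (phi : G -> G -> rat) (c : chain2) : rat :=
  \sum_(p <- c) p.2 * phi p.1.1 p.1.2.

(* Q-linear functionals on PH^2(G;Q) = pZ^2 / pB^2, represented by functions
   on cochains that are Q-linear on pZ^2 and vanish on pB^2. *)
Definition PH2_functional L (Lam : (G -> G -> rat) -> rat) : Prop :=
  (forall (a : rat) phi psi, pcocycle2 L phi -> pcocycle2 L psi ->
     Lam (fun g h => a * phi g h + psi g h) = a * Lam phi + Lam psi) /\
  (forall phi, pcoboundary2 L phi -> Lam phi = 0).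

(* alpha_2(G,L) : H_2(G;Q) -> (PH^2(G;Q))^*, [c] |-> ([phi] |-> phi(c)),
   is an isomorphism (bijective), written out on representatives:
   injective  : a 2-cycle pairing to 0 with every p-bounded 2-cocycle is a
                2-boundary;
   surjective : every linear functional on PH^2 is pairing with a 2-cycle. *)
Definition alpha2_iso (L : G -> nat) : Prop :=
  (forall c : chain2, is_cycle2 c ->
     (forall phi, pcocycle2 L phi -> pair2 phi c = 0) -> is_boundary2 c) /\
  (forall Lam, PH2_functional L Lam ->
     exists c : chain2, is_cycle2 c /\
       forall phi, pcocycle2 L phi -> Lam phi = pair2 phi c).
End Bar.

(* Choose a geodesic word w_g for every g, and for every pair (g, h) a van
   Kampen decomposition of the relator w_g w_h w_gh^-1 into at most
   f(L g + L h) conjugates of relators; counting the relators r_j used, with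
   sign, gives a vector N(g, h) in Q^W.  Reading words as paths in the bar
   complex, the cell (g, h) is homologous to sum_j N(g, h)_j [r_j] up to
   geodesic paths, so every 2-cycle c is homologous to sum_j N(c)_j [r_j], and
   dually every 2-cocycle phi equals (g, h) |-> <N(g, h), v_phi> plus the
   coboundary of g |-> phi(1, 1) - phi(path of w_g), with v_phi the values of
   phi on the relator cycles [r_j].  When phi has polynomial growth both
   summands do: the first because the Dehn function is polynomial, the second
   because |w_g| = L g.  Hence pairings of p-bounded cocycles with 2-cycles are
   controlled by the finite-dimensional data N(c) and v_phi, and the theorem
   reduces to linear algebra in Q^W: injectivity is a separation argument and
   surjectivity the representation of a linear functional by a vector. *)

From mathcomp Require Import all_boot all_order all_algebra all_fingroup.
From mathcomp Require Import ring lra zify.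
From Stdlib Require Import FunctionalExtensionality Classical.
Set Implicit Arguments. Unset Strict Implicit. Unset Printing Implicit Defensive.
Import Order.TTheory GRing.Theory Num.Theory.
Local Open Scope ring_scope.

Section Combinations.
Variable T : eqType.
Implicit Types (c : seq (T * rat)) (F : T -> rat).

Definition coef c (x : T) : rat := \sum_(p <- c | p.1 == x) p.2.
Definition pairing c F : rat := \sum_(p <- c) p.2 * F p.1.
Definition scalec (a : rat) c := [seq (p.1, a * p.2) | p <- c].

Lemma coef_nil x : coef [::] x = 0. Proof. by rewrite /coef big_nil. Qed.

Lemma coef_cons t c x : coef (t :: c) x = (if t.1 == x then t.2 else 0) + coef c x.
Proof. by rewrite /coef big_cons; case: (t.1 == x); rewrite ?add0r. Qed.

Lemma coef_consI t c x : coef (t :: c) x = t.2 * (x == t.1)%:R + coef c x.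
Proof. by rewrite coef_cons eq_sym; case: (x == t.1); rewrite ?mulr1 ?mulr0. Qed.

Lemma coef_cat c1 c2 x : coef (c1 ++ c2) x = coef c1 x + coef c2 x.
Proof. by rewrite /coef big_cat. Qed.

Lemma coef_flatten (I : Type) (s : seq I) (C : I -> seq (T * rat)) x :
  coef (flatten [seq C i | i <- s]) x = \sum_(i <- s) coef (C i) x.
Proof.
elim: s => [|i s IH]; first by rewrite big_nil coef_nil.
by rewrite /= coef_cat IH big_cons.
Qed.

Lemma coef_scale a c x : coef (scalec a c) x = a * coef c x.
Proof.
elim: c => [|t c IH]; first by rewrite coef_nil mulr0.
by rewrite /= !coef_cons IH mulrDr; case: (t.1 == x); rewrite ?mulr0.
Qed.

Lemma coef_notin c x : x \notin map fst c -> coef c x = 0.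
Proof.
move=> xn; rewrite /coef big1_seq // => p /andP[/eqP px pc].
by move: xn; rewrite -px (map_f fst pc).
Qed.

Lemma pairing_nil F : pairing [::] F = 0. Proof. by rewrite /pairing big_nil. Qed.

Lemma pairing_cons y a c F : pairing ((y, a) :: c) F = a * F y + pairing c F.
Proof. by rewrite /pairing big_cons. Qed.

Lemma pairing_cat c1 c2 F : pairing (c1 ++ c2) F = pairing c1 F + pairing c2 F.
Proof. by rewrite /pairing big_cat. Qed.

Lemma pairing_flatten (I : Type) (s : seq I) (C : I -> seq (T * rat)) F :
  pairing (flatten [seq C i | i <- s]) F = \sum_(i <- s) pairing (C i) F.
Proof.
elim: s => [|i s IH]; first by rewrite big_nil pairing_nil.
by rewrite /= pairing_cat IH big_cons.
Qed.

Lemma pairing_scale a c F : pairing (scalec a c) F = a * pairing c F.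
Proof. by rewrite /pairing big_map big_distrr; apply: eq_bigr => p _ /=; rewrite mulrA. Qed.

Lemma pairing_linear c F1 F2 (a : rat) :
  pairing c (fun x => a * F1 x + F2 x) = a * pairing c F1 + pairing c F2.
Proof.
by rewrite /pairing big_distrr -big_split; apply: eq_bigr => p _; rewrite mulrDr mulrCA.
Qed.

Lemma pairing_coefE c (s : seq T) F : uniq s -> {subset map fst c <= s} ->
  pairing c F = \sum_(x <- s) coef c x * F x.
Proof.
move=> us; elim: c => [|[y a] c IH] sub.
  by rewrite pairing_nil big1_seq // => x _; rewrite coef_nil mul0r.
rewrite pairing_cons IH; last by move=> z zc; apply: sub; rewrite inE zc orbT.
have ys : y \in s by apply: sub; rewrite inE eqxx.
under [in RHS]eq_bigr do rewrite coef_cons mulrDl.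
rewrite big_split /=; congr (_ + _).
rewrite (bigD1_seq y) //= eqxx big1_seq ?addr0 // => x /andP[xy _].
by rewrite eq_sym (negbTE xy) mul0r.
Qed.

Lemma eq_pairing c1 c2 F : coef c1 =1 coef c2 -> pairing c1 F = pairing c2 F.
Proof.
move=> e; set s := undup (map fst c1 ++ map fst c2).
rewrite (@pairing_coefE c1 s) ?(@pairing_coefE c2 s) ?undup_uniq //.
- by apply: eq_bigr => x _; rewrite e.
- by move=> z zc; rewrite mem_undup mem_cat zc orbT.
- by move=> z zc; rewrite mem_undup mem_cat zc.
Qed.

Lemma pairing_coef0 c F : coef c =1 (fun _ => 0) -> pairing c F = 0.
Proof. by move=> c0; rewrite (@eq_pairing _ [::]) ?pairing_nil // => x; rewrite c0 coef_nil. Qed.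
End Combinations.

Section BarComplex.
Variable G : groupType.
Implicit Types (phi : G -> G -> rat) (c : chain2 G) (d : chain3 G) (f : G * G -> rat).

Lemma is_cycle2E c : is_cycle2 c <-> forall g, coef (bnd2 c) g = 0.
Proof. by []. Qed.

Lemma pair2E phi c : pair2 phi c = pairing c (fun x => phi x.1 x.2).
Proof. by []. Qed.

Lemma bnd2_cons (t : (G * G) * rat) c : bnd2 (t :: c) =
  [:: (t.1.2, t.2); ((t.1.1 * t.1.2)%g, - t.2); (t.1.1, t.2)] ++ bnd2 c.
Proof. by []. Qed.

Lemma bnd2_cat c1 c2 : bnd2 (c1 ++ c2) = bnd2 c1 ++ bnd2 c2.
Proof. by rewrite /bnd2 map_cat flatten_cat. Qed.

Lemma bnd2_flatten (I : Type) (s : seq I) (C : I -> chain2 G) :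
  bnd2 (flatten [seq C i | i <- s]) = flatten [seq bnd2 (C i) | i <- s].
Proof. by elim: s => [|i s IH] //=; rewrite bnd2_cat IH. Qed.

Lemma coef_bnd2_scale (a : rat) c x : coef (bnd2 (scalec a c)) x = a * coef (bnd2 c) x.
Proof.
elim: c => [|t c IH]; first by rewrite coef_nil mulr0.
by rewrite /= bnd2_cons [in RHS]bnd2_cons !coef_cat IH /= !coef_consI coef_nil /=; ring.
Qed.

Lemma bnd3_cat d1 d2 : bnd3 (d1 ++ d2) = bnd3 d1 ++ bnd3 d2.
Proof. by rewrite /bnd3 map_cat flatten_cat. Qed.

Lemma coef_bnd3_1 (a b c : G) (r : rat) x : coef (bnd3 [:: ((a, b, c), r)]) x =
  r * ((x == (b, c))%:R - (x == ((a * b)%g, c))%:R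
       + (x == (a, (b * c)%g))%:R - (x == (a, b))%:R).
Proof. by rewrite /bnd3 /= !coef_consI coef_nil /=; ring. Qed.

Lemma coef_bnd3_cons t d x : coef (bnd3 (t :: d)) x = coef (bnd3 [:: t]) x + coef (bnd3 d) x.
Proof. by rewrite -coef_cat -bnd3_cat. Qed.

Lemma bnd3_is_cycle (a b c : G) : is_cycle2 (bnd3 [:: ((a, b, c), 1)]).
Proof. by apply/is_cycle2E => x; rewrite /bnd3 /= !coef_consI coef_nil /= -!mulgA; ring. Qed.

Definition boundary_fun f := exists d, forall x, coef (bnd3 d) x = f x.

Lemma boundary_fun0 : boundary_fun (fun _ => 0).
Proof. by exists [::] => x; rewrite coef_nil. Qed.

Lemma eq_boundary_fun f1 f2 : f1 =1 f2 -> boundary_fun f1 -> boundary_fun f2.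
Proof. by move=> e [d hd]; exists d => x; rewrite hd e. Qed.

Lemma boundary_fun_bnd3 d : boundary_fun (coef (bnd3 d)).
Proof. by exists d. Qed.

Lemma boundary_funD f1 f2 :
  boundary_fun f1 -> boundary_fun f2 -> boundary_fun (fun x => f1 x + f2 x).
Proof.
by move=> [d1 h1] [d2 h2]; exists (d1 ++ d2) => x; rewrite bnd3_cat coef_cat h1 h2.
Qed.

Lemma boundary_funZ (a : rat) f : boundary_fun f -> boundary_fun (fun x => a * f x).
Proof.
move=> [d h]; exists (scalec a d) => x; rewrite -h.
elim: d {h} => [|[[[p q] r] b] d IH]; first by rewrite !coef_nil mulr0.
by rewrite /= coef_bnd3_cons IH [in RHS]coef_bnd3_cons mulrDr !coef_bnd3_1 mulrA.
Qed.

Lemma boundary_funB f1 f2 :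
  boundary_fun f1 -> boundary_fun f2 -> boundary_fun (fun x => f1 x - f2 x).
Proof.
move=> h1 /(boundary_funZ (-1)) h2.
by apply: eq_boundary_fun (boundary_funD h1 h2) => x; rewrite mulN1r.
Qed.

Lemma pair2_bnd3 phi d : is_cocycle2 phi -> pair2 phi (bnd3 d) = 0.
Proof.
move=> hphi; elim: d => [|[[[a b] c] r] d IH]; first by rewrite pair2E pairing_nil.
rewrite -cat1s bnd3_cat pair2E pairing_cat -[pairing (bnd3 d) _]pair2E IH addr0.
rewrite /bnd3 /= !pairing_cons pairing_nil /=.
transitivity (r * (phi b c - phi (a * b)%g c + phi a (b * c)%g - phi a b)); first ring.
by rewrite hphi mulr0.
Qed.

Lemma pair2_homologous phi c1 c2 : is_cocycle2 phi ->
  boundary_fun (fun x => coef c1 x - coef c2 x) -> pair2 phi c1 = pair2 phi c2.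
Proof.
move=> hphi [d hd]; rewrite !pair2E.
rewrite (@eq_pairing _ c1 (bnd3 d ++ c2)); last by move=> x; rewrite coef_cat hd addrNK.
by rewrite pairing_cat -pair2E pair2_bnd3 // add0r.
Qed.

Lemma cobnd1_cocycle (psi : G -> rat) : is_cocycle2 (cobnd1 psi).
Proof. by move=> a b c; rewrite /cobnd1 mulgA; ring. Qed.

Lemma pair2_cobnd1 (psi : G -> rat) c : pair2 (cobnd1 psi) c = pairing (bnd2 c) psi.
Proof.
elim: c => [|[[a b] r] c IH]; first by rewrite pair2E !pairing_nil.
rewrite pair2E pairing_cons -pair2E IH bnd2_cons pairing_cat !pairing_cons pairing_nil.
by rewrite /cobnd1 /=; ring.
Qed.

Lemma cocycle2_lin (a : rat) phi psi : is_cocycle2 phi -> is_cocycle2 psi ->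
  is_cocycle2 (fun g h => a * phi g h + psi g h).
Proof.
move=> h1 h2 x y z; have := h1 x y z; have := h2 x y z => e2 e1.
transitivity (a * (phi y z - phi (x * y)%g z + phi x (y * z)%g - phi x y) +
  (psi y z - psi (x * y)%g z + psi x (y * z)%g - psi x y)); first ring.
by rewrite e1 e2 mulr0 addr0.
Qed.
End BarComplex.

Section Words.
Variables (S : finType) (G : groupType) (gen : S -> G).
Local Notation ev := (evalw gen).
Implicit Types (u v w : word S) (a b : letter S).

Definition letter_val a : G := if a.2 then ((gen a.1)^-1)%g else gen a.1.
Definition flip_letter a : letter S := (a.1, ~~ a.2).

Lemma evalw_cons a w : ev (a :: w) = (letter_val a * ev w)%g. Proof. by []. Qed.

Lemma evalw_cat u v : ev (u ++ v) = (ev u * ev v)%g.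
Proof. by elim: u => [|a u IH] /=; rewrite ?mul1g // IH mulgA. Qed.

Lemma winv_cons a w : winv (a :: w) = winv w ++ [:: flip_letter a].
Proof. by rewrite /winv /= rev_cons -cats1. Qed.

Lemma winvK w : winv (winv w) = w.
Proof.
rewrite /winv map_rev revK -map_comp map_id_in // => -[s b] _ /=.
by rewrite negbK.
Qed.

Lemma size_winv w : size (winv w) = size w.
Proof. by rewrite /winv size_rev size_map. Qed.

Lemma letter_val_flip a : letter_val (flip_letter a) = ((letter_val a)^-1)%g.
Proof. by case: a => s [] /=; rewrite /letter_val /= ?invgK. Qed.

Lemma evalw_winv w : ev (winv w) = ((ev w)^-1)%g.
Proof.
elim: w => [|a w IH]; first by rewrite /= invg1.
by rewrite winv_cons evalw_cat IH !evalw_cons letter_val_flip /= mulg1 invgM.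
Qed.

Lemma letter_val_cancel a b :
  (a.1 == b.1) && (a.2 != b.2) -> (letter_val a * letter_val b = 1)%g.
Proof.
case: a b => [s x] [t y] /andP[/= /eqP <-]; rewrite /letter_val /=.
by case: x; case: y => //= _; rewrite ?mulVg ?mulgV.
Qed.

Lemma evalw_fred w : ev (fred w) = ev w.
Proof.
elim: w => [|a w IH] //=.
case E: (fred w) => [|b r]; first by rewrite /= -IH E.
case: ifP => C; last by rewrite /= -IH E.
by rewrite -IH E /= mulgA letter_val_cancel // mul1g.
Qed.

Lemma size_fred w : (size (fred w) <= size w)%N.
Proof.
elim: w => [|a w IH] //=.
case E: (fred w) => [|b r] //=; rewrite E in IH.
case: ifP => _ /=; last by [].
by apply: leq_trans (leqnSn _) _; apply: leq_trans (leqnSn _) _.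
Qed.

(* A word read as an edge path in the Cayley graph, starting at [p]: a letter
   [s] crossed at vertex [q] gives the bar 2-cell [(q, s)], and a letter [s^-1]
   gives [-(q s^-1, s)]. *)
Definition path_cell (q : G) a : (G * G) * rat :=
  if a.2 then ((q * (gen a.1)^-1, gen a.1)%g, -1) else ((q, gen a.1), 1).

Fixpoint path_chain (p : G) w : chain2 G :=
  if w is a :: w' then path_cell p a :: path_chain (p * letter_val a)%g w' else [::].

Definition letter_chain w : chain1 G :=
  [seq (gen a.1, if a.2 then -1 else 1) | a <- w].

Lemma path_chain_cat p u v : path_chain p (u ++ v) = path_chain p u ++ path_chain (p * ev u)%g v.
Proof. by elim: u p => [|a u IH] p /=; rewrite ?mulg1 // IH mulgA. Qed.

Lemma size_path_chain p w : size (path_chain p w) = size w.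
Proof. by elim: w p => [|a w IH] p //=; rewrite IH. Qed.

Lemma coef_path_chain_winv p w x :
  coef (path_chain (p * ev w)%g (winv w)) x = - coef (path_chain p w) x.
Proof.
elim: w p => [|a w IH] p; first by rewrite /= coef_nil oppr0.
rewrite winv_cons path_chain_cat coef_cat evalw_cons mulgA IH evalw_winv mulgK.
rewrite /= coef_cons [in RHS]coef_cons coef_nil addr0 opprD addrC; congr (_ + _).
case: a => s [] /=; rewrite /path_cell /letter_val /= ?mulgK;
by case: ifP => _; rewrite ?opprK ?oppr0.
Qed.

Lemma coef_path_chain_fred p w x : coef (path_chain p (fred w)) x = coef (path_chain p w) x.
Proof.
elim: w p => [|a w IH] p //=.
case E: (fred w) => [|b r]; first by rewrite /= !coef_cons -IH E.
case: ifP => C; last by rewrite /= !coef_cons -IH E /= !coef_cons.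
rewrite coef_cons -IH E /= !coef_cons -mulgA (letter_val_cancel C) mulg1 addrA.
suff -> : (if (path_cell p a).1 == x then (path_cell p a).2 else 0) +
    (if (path_cell (p * letter_val a)%g b).1 == x
     then (path_cell (p * letter_val a)%g b).2 else 0) = 0 by rewrite add0r.
move: C; case: a b {E IH} => [s u] [t v] /andP[/= /eqP <-].
rewrite /path_cell /letter_val /=; case: u; case: v => //= _; rewrite ?mulgK ?mulgV ?mulg1;
by case: ifP => _; rewrite ?addrN ?addNr ?addr0.
Qed.

Lemma coef_bnd2_path_chain p w g : coef (bnd2 (path_chain p w)) g =
  coef (letter_chain w) g - (g == p * ev w)%g%:R + (g == p)%:R.
Proof.
elim: w p => [|a w IH] p; first by rewrite /= coef_nil mulg1 sub0r addNr.
rewrite /= bnd2_cons coef_cat IH /= !coef_cons coef_nil addr0 mulgA.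
case: a => s [] /=; rewrite /path_cell /letter_val /= ?mulgK ?mulgVK.
- rewrite !(eq_sym _ g); case: (g =P gen s); case: (g =P p);
  case: (g =P (p * (gen s)^-1)%g); case: (g =P (p * (gen s)^-1 * ev w)%g);
  move=> *; rewrite /= ?add0r ?addr0; ring.
- rewrite !(eq_sym _ g); case: (g =P gen s); case: (g =P p);
  case: (g =P (p * gen s)%g); case: (g =P (p * gen s * ev w)%g);
  move=> *; rewrite /= ?add0r ?addr0; ring.
Qed.

(* The bar 3-cells [(q, p', s)] along the path provide the homotopy. *)
Lemma path_chain_translate (q p : G) w : boundary_fun (fun x =>
  coef (path_chain (q * p)%g w) x - coef (path_chain p w) x
  - (x == (q, (p * ev w)%g))%:R + (x == (q, p))%:R).
Proof.
elim: w p => [|a w IH] p.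
  by eapply eq_boundary_fun; last exact: boundary_fun0; move=> x /=; rewrite !coef_nil mulg1; ring.
case: a => s [].
- apply: eq_boundary_fun (boundary_funD (IH (p * (gen s)^-1)%g)
    (boundary_fun_bnd3 [:: ((q, (p * (gen s)^-1)%g, gen s), 1)])) => x.
  by rewrite coef_bnd3_1 /= !coef_consI /path_cell /letter_val /= !mulgA mulgVK; ring.
- apply: eq_boundary_fun (boundary_funD (IH (p * gen s)%g)
    (boundary_fun_bnd3 [:: ((q, p, gen s), -1)])) => x.
  by rewrite coef_bnd3_1 /= !coef_consI /path_cell /letter_val /= !mulgA; ring.
Qed.

Lemma mem_path_chain (q : G) w t : t \in path_chain q w ->
  exists u, [/\ (size u <= size w)%N, t.1.1 = (q * ev u)%g,
               (exists s, t.1.2 = gen s) & `|t.2| = 1].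
Proof.
elim: w q => [|a w IH] q //=.
rewrite inE => /orP[/eqP ->|ht].
  case: a => s [] /=; rewrite /path_cell /=.
  - exists [:: (s, true)]; split; rewrite /= ?/letter_val /= ?mulg1 ?normrN ?normr1 //.
    by exists s.
  - exists [::]; split; rewrite /= ?mulg1 ?normr1 //; by exists s.
have [u [su e1 e2 e3]] := IH _ ht.
by exists (a :: u); split => //; rewrite e1 evalw_cons mulgA.
Qed.
End Words.

Section LinearAlgebra.
Variables (F : fieldType) (n : nat).
Implicit Types (v w : 'rV[F]_n) (P : 'rV[F]_n -> Prop).

Definition dotr v w : F := \sum_(j < n) v 0 j * w 0 j.

Lemma dotr_mx v w : dotr v w = (v *m w^T) 0 0.
Proof. by rewrite mxE; apply: eq_bigr => j _; rewrite mxE. Qed.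

Lemma dotrC v w : dotr v w = dotr w v.
Proof. by apply: eq_bigr => j _; rewrite mulrC. Qed.

Lemma dotr0l w : dotr 0 w = 0.
Proof. by rewrite /dotr big1 // => j _; rewrite mxE mul0r. Qed.

Lemma dotrDl v1 v2 w : dotr (v1 + v2) w = dotr v1 w + dotr v2 w.
Proof. by rewrite /dotr -big_split; apply: eq_bigr => j _; rewrite mxE mulrDl. Qed.

Lemma dotrZl (a : F) v w : dotr (a *: v) w = a * dotr v w.
Proof. by rewrite /dotr big_distrr; apply: eq_bigr => j _; rewrite mxE -mulrA. Qed.

Lemma dotrDr v w1 w2 : dotr v (w1 + w2) = dotr v w1 + dotr v w2.
Proof. by rewrite dotrC dotrDl !(dotrC v). Qed.

Lemma dotrZr (a : F) v w : dotr v (a *: w) = a * dotr v w.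
Proof. by rewrite dotrC dotrZl dotrC. Qed.

Lemma dotr_suml (I : Type) (s : seq I) (V : I -> 'rV[F]_n) w :
  dotr (\sum_(i <- s) V i) w = \sum_(i <- s) dotr (V i) w.
Proof.
elim: s => [|i s IH]; first by rewrite !big_nil dotr0l.
by rewrite !big_cons dotrDl IH.
Qed.

Definition lin_closed P := P 0 /\ forall (a : F) v w, P v -> P w -> P (a *: v + w).

Lemma lin_closed_rowspace P : lin_closed P ->
  exists M : 'M[F]_n, forall w, P w <-> (w <= M)%MS.
Proof.
move=> [P0 PD].
suff: forall d (M : 'M[F]_n), (n - \rank M <= d)%N -> (forall w, (w <= M)%MS -> P w) ->
    exists M' : 'M[F]_n, forall w, P w <-> (w <= M')%MS.
  move/(_ n 0); apply; first exact: leq_subr.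
  by move=> w; rewrite submx0 => /eqP ->.
elim=> [|d IH] M hd hM.
  exists M => w; split => [_|]; last exact: hM.
  by rewrite submx_full // /row_full; have := rank_leq_col M; lia.
case: (classic (forall w, P w -> (w <= M)%MS)) => [hPM|].
  by exists M => w; split; [exact: hPM | exact: hM].
move=> /(not_all_ex_not _ _) [w nPM].
have [Pw nwM] := imply_to_and _ _ nPM.
apply: (IH (M + w)%MS).
  have : (\rank M < \rank (M + w)%MS)%N.
    apply: rank_ltmx; rewrite ltmxE addsmxSl /=; apply/negP => h.
    by apply: nwM; apply: submx_trans h; exact: addsmxSr.
  by have := rank_leq_col (M + w)%MS; lia.
move=> w' /sub_addsmxP [[u1 u2] /= ->].
have /sub_rVP [a ->] : (u2 *m w <= w)%MS by apply: submxMl.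
by rewrite addrC; apply: PD => //; apply: hM; apply: submxMl.
Qed.

Lemma rV_neq0_entry (x : 'rV[F]_n) : x != 0 -> exists j, x 0 j != 0.
Proof.
move=> hx; apply: NNPP => hn; move/eqP: hx; apply; apply/matrixP => i j.
rewrite (ord1 i) mxE; apply/eqP; apply: negbNE; apply/negP => hj.
by apply: hn; exists j.
Qed.

Lemma lin_closed_separate P v : lin_closed P -> ~ P v ->
  exists u, (forall w, P w -> dotr w u = 0) /\ dotr v u != 0.
Proof.
move=> hP nv; have [M hM] := lin_closed_rowspace hP.
have : v *m cokermx M != 0 by rewrite -submxE; apply/negP => /hM.
case/rV_neq0_entry => j hj.
have dotr_coker w : dotr w (\row_i (cokermx M) i j) = (w *m cokermx M) 0 j.
  by rewrite mxE; apply: eq_bigr => i _; rewrite mxE.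
exists (\row_i (cokermx M) i j); split; last by rewrite dotr_coker.
by move=> w /hM; rewrite submxE => /eqP h; rewrite dotr_coker h mxE.
Qed.
End LinearAlgebra.

Lemma fredholm_alternative (F : fieldType) r p (E : 'M[F]_(r, p)) (b : 'cV[F]_r) :
  (forall a : 'rV[F]_r, a *m E = 0 -> a *m b = 0) -> exists x : 'cV[F]_p, E *m x = b.
Proof.
move=> h; case: (boolP (b^T <= E^T)%MS) => hb.
  case/submxP: hb => D eD; exists D^T.
  by rewrite -[E]trmxK -trmx_mul -eD trmxK.
exfalso; move: hb; rewrite submxE => /rV_neq0_entry [j hj].
set K := cokermx E^T.
have hE : (\row_i K i j) *m E = 0.
  apply/matrixP => i l; rewrite (ord1 i) !mxE.
  have := congr1 (fun X : 'M[F]_(p, r) => X l j) (mulmx_coker E^T); rewrite !mxE => e.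
  rewrite -[RHS]e; apply: eq_bigr => i' _; by rewrite !mxE mulrC.
have e : (b^T *m K) 0 j = ((\row_i K i j) *m b) 0 0.
  by rewrite !mxE; apply: eq_bigr => i _; rewrite !mxE mulrC.
by move: hj; rewrite e h // mxE eqxx.
Qed.

Lemma represent_functional (F : fieldType) n (U N : 'rV[F]_n -> Prop) (lam : 'rV[F]_n -> F) :
  lin_closed U -> lin_closed N ->
  (forall (a : F) v w, U v -> U w -> lam (a *: v + w) = a * lam v + lam w) ->
  (forall v, U v -> (forall x, N x -> dotr x v = 0) -> lam v = 0) ->
  exists x, N x /\ forall v, U v -> lam v = dotr x v.
Proof.
move=> hU hN hlin hker.
have [A hA] := lin_closed_rowspace hU; have [B hB] := lin_closed_rowspace hN.
have lam0 : lam 0 = 0.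
  have := hlin 1 0 0 hU.1 hU.1; rewrite scale1r addr0 mul1r => e.
  by apply: (addrI (lam 0)); rewrite addr0 -e.
set t : 'cV[F]_n := \col_i lam (row i A).
have lamA (c : 'rV[F]_n) : lam (c *m A) = (c *m t) 0 0.
  rewrite mulmx_sum_row mxE.
  have : U (\sum_(i < n) c 0 i *: row i A) /\
         lam (\sum_(i < n) c 0 i *: row i A) = \sum_(i < n) c 0 i * t i 0.
    elim/big_rec2: _ => [|i y1 y2 _ [Uy1 ey]]; first by split; [exact: hU.1 | exact: lam0].
    have Ur : U (row i A) by apply/hA; exact: row_sub.
    by split; [exact: hU.2 | rewrite hlin // ey mxE].
  by case.
have [y hy] : exists y : 'cV[F]_n, (A *m B^T) *m y = t.
  apply: fredholm_alternative => a ha.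
  have Uv : U (a *m A) by apply/hA; exact: submxMl.
  have := hker _ Uv; rewrite lamA => hl.
  apply/matrixP => i j; rewrite (ord1 i) (ord1 j) [in RHS]mxE.
  apply: hl => x /hB /submxP [d ->].
  by rewrite dotrC dotr_mx trmx_mul mulmxA -(mulmxA a) ha !mul0mx mxE.
exists (y^T *m B); split; first by apply/hB; exact: submxMl.
move=> v /hA /submxP [c ->].
by rewrite lamA dotrC dotr_mx trmx_mul trmxK -hy !mulmxA.
Qed.

Lemma growth_const_ge0 (C x y : rat) : 0 < x -> `|y| <= C * x -> 0 <= C.
Proof. by move=> hx h; rewrite -(pmulr_lge0 _ hx); apply: le_trans h. Qed.

Section Growth.
Variables (G : groupType) (L : G -> nat).
Hypothesis L_mulg : forall g h : G, (L (g * h)%g <= L g + L h)%N.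
Implicit Types (phi psi : G -> G -> rat) (chi f : G -> rat).

Lemma pgrowth2_lin (a : rat) phi psi : pgrowth2 L phi -> pgrowth2 L psi ->
  pgrowth2 L (fun g h => a * phi g h + psi g h).
Proof.
move=> [C1 [k1 h1]] [C2 [k2 h2]]; exists (`|a| * C1 + C2), (k1 + k2)%N => g h.
set X := 1 + (L g + L h)%:R.
have X1 : 1 <= X by rewrite lerDl.
have X0 k : 0 < X ^+ k by apply: exprn_gt0; apply: lt_le_trans X1.
have C10 : 0 <= C1 := growth_const_ge0 (X0 k1) (h1 g h).
have C20 : 0 <= C2 := growth_const_ge0 (X0 k2) (h2 g h).
apply: le_trans (ler_normD _ _) _; rewrite normrM mulrDl -mulrA; apply: lerD.
  apply: ler_wpM2l => //; apply: le_trans (h1 g h) _; apply: ler_wpM2l => //.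
  by apply: ler_weXn2l => //; rewrite leq_addr.
apply: le_trans (h2 g h) _; apply: ler_wpM2l => //.
by apply: ler_weXn2l => //; rewrite leq_addl.
Qed.

Lemma pcocycle2_lin (a : rat) phi psi : pcocycle2 L phi -> pcocycle2 L psi ->
  pcocycle2 L (fun g h => a * phi g h + psi g h).
Proof. by move=> [g1 c1] [g2 c2]; split; [apply: pgrowth2_lin | apply: cocycle2_lin]. Qed.

Lemma pgrowth2_cobnd1 chi : pgrowth1 L chi -> pgrowth2 L (cobnd1 chi).
Proof.
move=> [C [k hchi]]; exists (3 * C), k => g h.
have C0 : 0 <= C.
  by apply: growth_const_ge0 (hchi g); apply: exprn_gt0; apply: ltr_pwDl.
have mono x y : (x <= y)%N -> C * (1 + x%:R) ^+ k <= C * (1 + y%:R) ^+ k.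
  move=> hxy; apply: ler_wpM2l => //; apply: lerXn2r; rewrite ?nnegrE ?addr_ge0 //.
  by rewrite lerD2l ler_nat.
have b1 := le_trans (hchi h) (mono _ _ (leq_addl (L g) (L h))).
have b2 := le_trans (hchi (g * h)%g) (mono _ _ (L_mulg g h)).
have b3 := le_trans (hchi g) (mono _ _ (leq_addr (L h) (L g))).
rewrite /cobnd1; apply: le_trans (ler_normD _ _) _.
apply: le_trans (lerD (ler_normB _ _) (lexx _)) _; lra.
Qed.

Lemma pcoboundary2_pcocycle2 phi : pcoboundary2 L phi -> pcocycle2 L phi.
Proof.
move=> [chi [hchi e]].
have -> : phi = cobnd1 chi.
  by apply: functional_extensionality => g; apply: functional_extensionality.
by split; [exact: pgrowth2_cobnd1 | exact: cobnd1_cocycle].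
Qed.

Lemma pgrowth1_add_bounded chi f M : pgrowth1 L chi -> (forall g, `|f g| <= M) ->
  pgrowth1 L (fun g => chi g + f g).
Proof.
move=> [C [k hchi]] hf; exists (C + M), k => g.
have M0 : 0 <= M by apply: le_trans (hf g).
apply: le_trans (ler_normD _ _) _; rewrite mulrDl; apply: lerD => //.
apply: le_trans (hf g) _; rewrite -{1}(mulr1 M); apply: ler_wpM2l => //.
by apply: exprn_ege1; rewrite lerDl.
Qed.

Lemma pgrowth2_cobnd1_bounded f M : (forall g, `|f g| <= M) -> pgrowth2 L (cobnd1 f).
Proof.
move=> hf; exists (3 * M), 0%N => g h; rewrite expr0 mulr1 /cobnd1.
apply: le_trans (ler_normD _ _) _; apply: le_trans (lerD (ler_normB _ _) (lexx _)) _.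
by have := hf h; have := hf (g * h)%g; have := hf g; lra.
Qed.
End Growth.

Lemma leq_wexp2r m n e : (m <= n)%N -> (m ^ e <= n ^ e)%N.
Proof. by move=> h; elim: e => [|e IH] //; rewrite !expnS leq_mul. Qed.

Lemma sum_le_size (T : eqType) (s : seq T) (F : T -> rat) M :
  (forall t, t \in s -> F t <= M) -> \sum_(t <- s) F t <= (size s)%:R * M.
Proof.
elim: s => [|t s IH] h; first by rewrite big_nil mul0r.
rewrite big_cons /= -addn1 natrD mulrDl mul1r addrC; apply: lerD.
  by apply: IH => u us; apply: h; rewrite inE us orbT.
by apply: h; rewrite inE eqxx.
Qed.

Section Presentation.
Variables (S : finType) (W : seq (word S)) (G : groupType) (gen : S -> G) (L : G -> nat).
Hypothesis hpres : presents gen W.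
Hypothesis hstd : is_std_length gen L.
Variables (C k : nat).
Hypothesis hdehn : forall (n : nat) (y : word S),
  in_relators W y -> (LF y <= n)%N -> area_le W y (C * n.+1 ^ k)%N.

Local Notation ev := (evalw gen).
Local Notation path_chain := (path_chain gen).
Implicit Types (w : word S) (g h : G) (phi : G -> G -> rat) (c : chain2 G).

Lemma evalw_relator r : r \in W -> ev r = 1%g.
Proof.
move=> rW; apply/(hpres.2 r); exists 1%N, [:: ([::], r)]; split => //=.
  by rewrite rW.
by rewrite !cats0.
Qed.

Lemma L_evalw w : (L (ev w) <= size w)%N.
Proof. by have [_ h] := hstd (ev w); apply: leq_trans (h w erefl) (size_fred w). Qed.

Lemma L_gen s : (L (gen s) <= 1)%N.
Proof. by have := L_evalw [:: (s, false)]; rewrite evalw_cons /= mulg1. Qed.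

Lemma geodesic_ex g : exists w, (ev w == g) && (size w == L g).
Proof.
have [[w [ew lw]] _] := hstd g.
by exists (fred w); rewrite evalw_fred ew eqxx -lw /LF eqxx.
Qed.

Definition geodesic g : word S := xchoose (geodesic_ex g).

Lemma evalw_geodesic g : ev (geodesic g) = g.
Proof. by have /andP[/eqP -> _] := xchooseP (geodesic_ex g). Qed.

Lemma size_geodesic g : size (geodesic g) = L g.
Proof. by have /andP[_ /eqP ->] := xchooseP (geodesic_ex g). Qed.

Lemma L_mulg g h : (L (g * h)%g <= L g + L h)%N.
Proof.
have := L_evalw (geodesic g ++ geodesic h).
by rewrite evalw_cat !evalw_geodesic size_cat !size_geodesic.
Qed.

Definition triangle_word g h : word S :=
  geodesic g ++ geodesic h ++ winv (geodesic (g * h)%g).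

Lemma evalw_triangle_word g h : ev (triangle_word g h) = 1%g.
Proof. by rewrite !evalw_cat evalw_winv !evalw_geodesic mulgA mulgV. Qed.

Definition conj_product (l : seq (word S * word S)) : word S :=
  flatten [seq p.1 ++ p.2 ++ winv p.1 | p <- l].

Definition relator_conj (p : word S * word S) : bool := (p.2 \in W) || (winv p.2 \in W).

Definition dehn_bound g h : nat := (C * (LF (triangle_word g h)).+1 ^ k)%N.

Lemma triangle_dec_ex g h : exists l, [&& (size l <= dehn_bound g h)%N,
  all relator_conj l & fred (conj_product l) == fred (triangle_word g h)].
Proof.
have hr : in_relators W (triangle_word g h) by apply/(hpres.2 _); exact: evalw_triangle_word.
have [l [l1 l2 l3]] := hdehn hr (leqnn _).
by exists l; rewrite l1 l2 /conj_product l3 eqxx.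
Qed.

Definition triangle_dec g h := xchoose (triangle_dec_ex g h).

Lemma triangle_decP g h : [/\ (size (triangle_dec g h) <= dehn_bound g h)%N,
  all relator_conj (triangle_dec g h) &
  fred (conj_product (triangle_dec g h)) = fred (triangle_word g h)].
Proof. by have /and3P[a b /eqP c] := xchooseP (triangle_dec_ex g h). Qed.

Lemma dehn_bound_le g h : (dehn_bound g h <= C * 2 ^ k * (1 + (L g + L h)) ^ k)%N.
Proof.
rewrite /dehn_bound -mulnA -expnMn leq_mul2l; apply/orP; right; apply: leq_wexp2r.
have := size_fred (triangle_word g h).
rewrite /LF /triangle_word !size_cat size_winv !size_geodesic.
by have := L_mulg g h; lia.
Qed.

Local Notation m := (size W).

Definition relator (j : 'I_m) : word S := nth [::] W j.

Lemma relator_in (j : 'I_m) : relator j \in W.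
Proof. exact: mem_nth. Qed.

Definition relator_vec (p : word S * word S) : 'rV[rat]_m :=
  if p.2 \in W then \row_j (index p.2 W == j)%:R
  else - \row_j (index (winv p.2) W == j)%:R.

Definition relator_count (l : seq (word S * word S)) : 'rV[rat]_m :=
  \sum_(p <- l) relator_vec p.

Definition relator_chain (a : 'rV[rat]_m) : chain2 G :=
  flatten [seq scalec (a 0 j) (path_chain 1%g (relator j)) | j <- index_enum 'I_m].

Lemma coef_relator_chain a x :
  coef (relator_chain a) x = \sum_(j < m) a 0 j * coef (path_chain 1%g (relator j)) x.
Proof. by rewrite coef_flatten; apply: eq_bigr => j _; rewrite coef_scale. Qed.

Lemma coef_relator_chain0 x : coef (relator_chain 0) x = 0.
Proof. by rewrite coef_relator_chain big1 // => j _; rewrite mxE mul0r. Qed.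

Lemma coef_relator_chainD a b x :
  coef (relator_chain (a + b)) x = coef (relator_chain a) x + coef (relator_chain b) x.
Proof. by rewrite !coef_relator_chain -big_split; apply: eq_bigr => j _; rewrite mxE mulrDl. Qed.

Lemma coef_relator_chainZ (r : rat) a x :
  coef (relator_chain (r *: a)) x = r * coef (relator_chain a) x.
Proof.
by rewrite !coef_relator_chain big_distrr; apply: eq_bigr => j _; rewrite !mxE -mulrA.
Qed.

Lemma coef_relator_chain_delta (i : nat) x : (i < m)%N ->
  coef (relator_chain (\row_j (i == j)%:R)) x = coef (path_chain 1%g (nth [::] W i)) x.
Proof.
move=> im; rewrite coef_relator_chain (bigD1 (Ordinal im)) //= mxE eqxx mul1r.
rewrite big1 ?addr0 // => j jn; rewrite mxE; case: eqP => [ij|]; last by rewrite mul0r.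
by case/negP: jn; apply/eqP/val_inj; rewrite /= ij.
Qed.

Lemma coef_path_chain_winv1 w x :
  coef (path_chain (ev w) (winv w)) x = - coef (path_chain 1%g w) x.
Proof. by rewrite -(coef_path_chain_winv gen 1%g w x) mul1g. Qed.

Lemma coef_relator_vec p x : relator_conj p ->
  coef (relator_chain (relator_vec p)) x = coef (path_chain 1%g p.2) x.
Proof.
rewrite /relator_conj /relator_vec; case: ifP => [pW _|pW /= iW].
  by rewrite coef_relator_chain_delta ?index_mem // nth_index.
rewrite -scaleN1r coef_relator_chainZ coef_relator_chain_delta ?index_mem // nth_index //.
by have := coef_path_chain_winv1 (winv p.2) x; rewrite winvK (evalw_relator iW) => ->; ring.
Qed.

Lemma conj_product_homologous l : all relator_conj l ->
  boundary_fun (fun x => coef (path_chain 1%g (conj_product l)) x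
                         - coef (relator_chain (relator_count l)) x).
Proof.
elim: l => [|p l IH] /=.
  move=> _; eapply eq_boundary_fun; last exact: boundary_fun0.
  by move=> y; rewrite /relator_count big_nil coef_nil coef_relator_chain0 subr0.
case/andP=> hp hl.
have ep2 : ev p.2 = 1%g.
  case/orP: hp => [/evalw_relator //|/evalw_relator].
  by rewrite evalw_winv => /eqP; rewrite invg_eq1 => /eqP.
have eb : ev (p.1 ++ p.2 ++ winv p.1) = 1%g.
  by rewrite !evalw_cat ep2 mul1g evalw_winv mulgV.
eapply eq_boundary_fun; last exact: (boundary_funD (IH hl) (path_chain_translate gen (ev p.1) 1%g p.2)).
move=> y; rewrite /conj_product /= path_chain_cat -/(conj_product l) eb mul1g coef_cat.
rewrite !path_chain_cat !coef_cat /relator_count big_cons coef_relator_chainD.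
rewrite -/(relator_count l) coef_relator_vec // mul1g ep2 !mulg1 coef_path_chain_winv1; ring.
Qed.

Lemma coef_path_chain_triangle g h x : coef (path_chain 1%g (triangle_word g h)) x =
  coef (path_chain 1%g (geodesic g)) x + coef (path_chain g (geodesic h)) x
  - coef (path_chain 1%g (geodesic (g * h)%g)) x.
Proof.
rewrite /triangle_word !path_chain_cat !coef_cat !evalw_geodesic !mul1g.
by rewrite -{1}(evalw_geodesic (g * h)%g) coef_path_chain_winv1 addrA.
Qed.

Lemma cell_homologous g h : boundary_fun (fun x =>
  (x == (g, h))%:R - coef (relator_chain (relator_count (triangle_dec g h))) x
  + coef (path_chain 1%g (geodesic g)) x + coef (path_chain 1%g (geodesic h)) x
  - coef (path_chain 1%g (geodesic (g * h)%g)) x - (x == (1%g, 1%g))%:R).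
Proof.
have [_ hall hf] := triangle_decP g h.
have hB := boundary_funB (boundary_funB (conj_product_homologous hall)
  (path_chain_translate gen g 1%g (geodesic h))) (boundary_fun_bnd3 [:: ((g, 1%g, 1%g), 1)]).
eapply eq_boundary_fun; last exact: hB.
move=> x /=; rewrite coef_bnd3_1 -coef_path_chain_fred hf coef_path_chain_fred.
by rewrite coef_path_chain_triangle !mulg1 !mul1g evalw_geodesic; ring.
Qed.

Definition count_chain c : 'rV[rat]_m :=
  \sum_(p <- c) p.2 *: relator_count (triangle_dec p.1.1 p.1.2).

Definition geodesic_filling (b : chain1 G) : chain2 G :=
  flatten [seq scalec q.2 (path_chain 1%g (geodesic q.1)) | q <- b].

Definition augmentation c : rat := \sum_(p <- c) p.2.

Lemma count_chain_cat c1 c2 : count_chain (c1 ++ c2) = count_chain c1 + count_chain c2.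
Proof. by rewrite /count_chain big_cat. Qed.

Lemma count_chain_scale (a : rat) c : count_chain (scalec a c) = a *: count_chain c.
Proof.
by rewrite /count_chain big_map scaler_sumr; apply: eq_bigr => p _ /=; rewrite scalerA.
Qed.

Lemma chain_homologous c : boundary_fun (fun x =>
  coef c x - coef (relator_chain (count_chain c)) x
  + coef (geodesic_filling (bnd2 c)) x - augmentation c * (x == (1%g, 1%g))%:R).
Proof.
elim: c => [|[[g h] a] c IH].
  eapply eq_boundary_fun; last exact: boundary_fun0.
  move=> x /=; rewrite /count_chain /augmentation !big_nil coef_relator_chain0.
  by rewrite /geodesic_filling /= !coef_nil; ring.
eapply eq_boundary_fun; last exact: (boundary_funD IH (boundary_funZ a (cell_homologous g h))).
move=> x /=; rewrite /count_chain /augmentation !big_cons /= coef_relator_chainD.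
rewrite coef_relator_chainZ coef_consI bnd2_cons /geodesic_filling /= !coef_cat !coef_scale /=.
ring.
Qed.

Lemma augmentation_bnd2 c : augmentation c = pairing (bnd2 c) (fun _ => 1).
Proof.
elim: c => [|t c IH]; first by rewrite /augmentation big_nil pairing_nil.
rewrite bnd2_cons pairing_cat -IH !pairing_cons pairing_nil /augmentation big_cons.
by rewrite -/(augmentation c); ring.
Qed.

Lemma cycle_homologous c : is_cycle2 c ->
  boundary_fun (fun x => coef c x - coef (relator_chain (count_chain c)) x).
Proof.
move=> /is_cycle2E hc.
have filling0 x : coef (geodesic_filling (bnd2 c)) x = 0.
  transitivity (pairing (bnd2 c) (fun g => coef (path_chain 1%g (geodesic g)) x)).
    by rewrite coef_flatten; apply: eq_bigr => q _; rewrite coef_scale.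
  exact: pairing_coef0.
have aug0 : augmentation c = 0 by rewrite augmentation_bnd2 pairing_coef0.
eapply eq_boundary_fun; last exact: (chain_homologous c).
by move=> x /=; rewrite filling0 aug0; ring.
Qed.

Definition relator_values phi : 'rV[rat]_m := \row_j pair2 phi (path_chain 1%g (relator j)).

Definition dehn_cochain (u : 'rV[rat]_m) (g h : G) : rat :=
  dotr (relator_count (triangle_dec g h)) u.

Definition geodesic_cochain phi (g : G) : rat :=
  phi 1%g 1%g - pair2 phi (path_chain 1%g (geodesic g)).

Lemma relator_values_lin (a : rat) phi psi :
  relator_values (fun g h => a * phi g h + psi g h) = a *: relator_values phi + relator_values psi.
Proof. by apply/matrixP => i j; rewrite !mxE !pair2E pairing_linear. Qed.

Lemma pair2_relator_chain phi a : pair2 phi (relator_chain a) = dotr a (relator_values phi).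
Proof.
rewrite pair2E pairing_flatten; apply: eq_bigr => j _.
by rewrite pairing_scale mxE.
Qed.

Lemma pair2_dehn_cochain (u : 'rV[rat]_m) c : pair2 (dehn_cochain u) c = dotr (count_chain c) u.
Proof. by rewrite /count_chain dotr_suml pair2E; apply: eq_bigr => p _; rewrite dotrZl. Qed.

Lemma pair2_cycle phi c : is_cocycle2 phi -> is_cycle2 c ->
  pair2 phi c = dotr (count_chain c) (relator_values phi).
Proof.
by move=> hphi hc; rewrite -pair2_relator_chain; apply: pair2_homologous (cycle_homologous hc).
Qed.

Lemma cocycle_decomposition phi g h : is_cocycle2 phi ->
  phi g h = dehn_cochain (relator_values phi) g h + cobnd1 (geodesic_cochain phi) g h.
Proof.
move=> hphi.
set c1 := ((g, h), 1) :: path_chain 1%g (geodesic g) ++ path_chain 1%g (geodesic h).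
set c2 := relator_chain (relator_count (triangle_dec g h))
          ++ path_chain 1%g (geodesic (g * h)%g) ++ [:: ((1%g, 1%g), 1)].
have : pair2 phi c1 = pair2 phi c2.
  apply: pair2_homologous hphi _; eapply eq_boundary_fun; last exact: cell_homologous g h.
  by move=> x /=; rewrite /c1 /c2 !coef_consI !coef_cat coef_consI coef_nil /=; ring.
rewrite !pair2E /c1 /c2 pairing_cons !pairing_cat pairing_cons pairing_nil -!pair2E.
by rewrite pair2_relator_chain /= /dehn_cochain /cobnd1 /geodesic_cochain; lra.
Qed.

Lemma pair2_path_chain_bound phi (Cp : rat) kp :
  (forall g h, `|phi g h| <= Cp * (1 + (L g + L h)%:R) ^+ kp) -> forall w,
  `|pair2 phi (path_chain 1%g w)| <= (size w)%:R * (Cp * (2 + (size w)%:R) ^+ kp).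
Proof.
move=> hphi w.
have C0 : 0 <= Cp.
  by apply: growth_const_ge0 (hphi 1%g 1%g); apply: exprn_gt0; rewrite ltr_pwDl.
rewrite pair2E; apply: le_trans (ler_norm_sum _ _ _) _.
rewrite -(size_path_chain gen 1%g w); apply: sum_le_size => t ht.
have [u [su -> [s ->] e3]] := mem_path_chain ht.
rewrite normrM e3 mul1r mul1g; apply: le_trans (hphi _ _) _.
apply: ler_wpM2l => //; apply: lerXn2r; rewrite ?nnegrE ?addr_ge0 //.
have : (L (ev u) + L (gen s) <= (size w).+1)%N.
  by have := L_evalw u; have := L_gen s; lia.
rewrite -(ler_nat rat) -addn1 natrD size_path_chain; lra.
Qed.

Lemma pgrowth1_geodesic_cochain phi : pgrowth2 L phi -> pgrowth1 L (geodesic_cochain phi).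
Proof.
move=> [Cp [kp hphi]]; exists (`|phi 1%g 1%g| + Cp * 2 ^+ kp), kp.+1 => g.
have C0 : 0 <= Cp.
  by apply: growth_const_ge0 (hphi 1%g 1%g); apply: exprn_gt0; rewrite ltr_pwDl.
set X := 1 + (L g)%:R.
have X1 : 1 <= X by rewrite lerDl.
have hb := pair2_path_chain_bound hphi (geodesic g); rewrite size_geodesic in hb.
rewrite /geodesic_cochain mulrDl; apply: le_trans (ler_normB _ _) _; apply: lerD.
  by rewrite -{1}(mulr1 `|_|); apply: ler_wpM2l => //; apply: exprn_ege1.
have h2 : (2 + (L g)%:R) ^+ kp <= 2 ^+ kp * X ^+ kp.
  have n0 : 0 <= (L g)%:R :> rat := ler0n _ _.
  by rewrite -exprMn; apply: lerXn2r; rewrite ?nnegrE /X; lra.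
apply: le_trans hb _.
have -> : Cp * 2 ^+ kp * X ^+ kp.+1 = X * (Cp * (2 ^+ kp * X ^+ kp)) by rewrite exprS; ring.
apply: ler_pM; rewrite ?ler0n ?mulr_ge0 ?exprn_ge0 ?addr_ge0 //; first by rewrite /X lerDr.
exact: ler_wpM2l.
Qed.

Definition l1norm (z : 'rV[rat]_m) : rat := \sum_(j < m) `|z 0 j|.

Lemma dotr_relator_count_bound l (z : 'rV[rat]_m) :
  `|dotr (relator_count l) z| <= (size l)%:R * l1norm z.
Proof.
rewrite /relator_count dotr_suml; apply: le_trans (ler_norm_sum _ _ _) _.
apply: sum_le_size => p _; apply: le_trans (ler_norm_sum _ _ _) _.
apply: ler_sum => j _; rewrite normrM -{2}(mul1r `|z 0 j|); apply: ler_wpM2r => //.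
rewrite /relator_vec; case: ifP => _; rewrite !mxE ?normrN normr_nat.
all: by case: (_ == _); rewrite /= ?ler01 ?lexx.
Qed.

(* The only place where the polynomial bound on the Dehn function matters. *)
Lemma pgrowth2_dehn_cochain (z : 'rV[rat]_m) : pgrowth2 L (dehn_cochain z).
Proof.
exists (l1norm z * (C * 2 ^ k)%:R), k => g h.
have M0 : 0 <= l1norm z by apply: sumr_ge0.
apply: le_trans (dotr_relator_count_bound _ _) _.
have [hs _ _] := triangle_decP g h.
have : (size (triangle_dec g h))%:R <= (C * 2 ^ k)%:R * (1 + (L g + L h)%:R) ^+ k :> rat.
  rewrite -[1 + _](natrD _ 1) -natrX -natrM ler_nat.
  exact: leq_trans hs (dehn_bound_le g h).
by move=> hle; rewrite mulrC -mulrA; apply: ler_wpM2l.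
Qed.

Definition generators : seq G := undup [seq gen s | s <- enum S].

Lemma letter_chain_keys w : {subset map fst (letter_chain gen w) <= generators}.
Proof.
move=> g; rewrite -map_comp => /mapP [a _ ->] /=.
by rewrite mem_undup; apply: map_f; rewrite mem_enum.
Qed.

Definition letter_matrix : 'M[rat]_(m, size generators) :=
  \matrix_(j, t) coef (letter_chain gen (relator j)) (nth 1%g generators t).

Lemma coef_bnd2_relator_chain a g :
  coef (bnd2 (relator_chain a)) g = \sum_(j < m) a 0 j * coef (letter_chain gen (relator j)) g.
Proof.
rewrite bnd2_flatten coef_flatten; apply: eq_bigr => j _.
by rewrite coef_bnd2_scale coef_bnd2_path_chain mul1g (evalw_relator (relator_in j)) addrNK.
Qed.

Lemma relator_chain_is_cycle a : a *m letter_matrix = 0 -> is_cycle2 (relator_chain a).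
Proof.
move=> ha; apply/is_cycle2E => g; rewrite coef_bnd2_relator_chain.
case: (boolP (g \in generators)) => hg.
  have := congr1 (fun X : 'M[rat]_(1, _) => X 0 (Ordinal (etrans (index_mem g _) hg))) ha.
  rewrite !mxE => e; rewrite -[RHS]e; apply: eq_bigr => j _.
  by rewrite !mxE /= nth_index.
rewrite big1 // => j _; rewrite coef_notin ?mulr0 //.
by apply/negP => /letter_chain_keys; rewrite (negbTE hg).
Qed.

Lemma pair2_cobnd1_relator (f : G -> rat) j :
  pair2 (cobnd1 f) (path_chain 1%g (relator j)) = pairing (letter_chain gen (relator j)) f.
Proof.
rewrite pair2_cobnd1; apply: eq_pairing => g.
by rewrite coef_bnd2_path_chain mul1g (evalw_relator (relator_in j)) addrNK.
Qed.

(* On relators, a cocycle vanishing on all cycles agrees with the coboundary of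
   a function supported on the finitely many generators. *)
Lemma relator_values_bounded_cobnd1 phi : (forall c, is_cycle2 c -> pair2 phi c = 0) ->
  exists f M, (forall g, `|f g| <= M) /\ relator_values (cobnd1 f) = relator_values phi.
Proof.
move=> hphi.
have [x hx] : exists x, letter_matrix *m x = (relator_values phi)^T.
  apply: fredholm_alternative => a ha.
  have := hphi _ (relator_chain_is_cycle ha); rewrite pair2_relator_chain => e.
  apply/matrixP => i i'; rewrite (ord1 i) (ord1 i') !mxE -[RHS]e.
  by apply: eq_bigr => j _; rewrite !mxE.
pose f g := \sum_(t < size generators) (g == nth 1%g generators t)%:R * x t 0.
have f_nth (t : 'I_(size generators)) : f (nth 1%g generators t) = x t 0.
  rewrite /f (bigD1 t) //= eqxx mul1r big1 ?addr0 // => t' tt'.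
  rewrite nth_uniq ?undup_uniq ?ltn_ord //.
  by rewrite -[(val t == val t')]/(t == t') eq_sym (negbTE tt') mul0r.
exists f, (\sum_(t < size generators) `|x t 0|); split.
  move=> g; apply: le_trans (ler_norm_sum _ _ _) _; apply: ler_sum => t _.
  rewrite normrM normr_nat -{2}(mul1r `|x t 0|); apply: ler_wpM2r => //.
  by case: (_ == _); rewrite /= ?ler01 ?lexx.
apply/matrixP => i j; rewrite (ord1 i) mxE pair2_cobnd1_relator.
have := congr1 (fun X : 'cV[rat]_m => X j 0) hx; rewrite !mxE => <-.
rewrite (@pairing_coefE _ _ generators) ?undup_uniq //; last exact: letter_chain_keys.
rewrite (big_nth 1%g) big_mkord; apply: eq_bigr => t _.
by rewrite mxE f_nth.
Qed.

Lemma pcoboundary2_of_cycle_orthogonal phi : pcocycle2 L phi ->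
  (forall c, is_cycle2 c -> pair2 phi c = 0) -> pcoboundary2 L phi.
Proof.
move=> [pg pc] hphi.
have [f [M [hf rvf]]] := relator_values_bounded_cobnd1 hphi.
pose phi' g h := -1 * cobnd1 f g h + phi g h.
have pphi' : pcocycle2 L phi'.
  apply: pcocycle2_lin => //; split; first exact: pgrowth2_cobnd1_bounded hf.
  exact: cobnd1_cocycle.
have rv0 : relator_values phi' = 0 by rewrite relator_values_lin rvf scaleN1r addNr.
exists (fun g => geodesic_cochain phi' g + f g); split.
  exact: pgrowth1_add_bounded (pgrowth1_geodesic_cochain pphi'.1) hf.
move=> g h; have := cocycle_decomposition g h pphi'.2.
by rewrite rv0 /dehn_cochain dotrC dotr0l /phi' /cobnd1 add0r; lra.
Qed.

Definition bounding_counts (a : 'rV[rat]_m) := boundary_fun (coef (relator_chain a)).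

Lemma lin_closed_bounding_counts : lin_closed bounding_counts.
Proof.
split; first by eapply eq_boundary_fun; last exact: boundary_fun0; move=> x; rewrite coef_relator_chain0.
move=> a v w hv hw; eapply eq_boundary_fun; last exact: (boundary_funD (boundary_funZ a hv) hw).
by move=> x /=; rewrite coef_relator_chainD coef_relator_chainZ.
Qed.

Lemma dehn_cochain_cocycle (z : 'rV[rat]_m) :
  (forall a, bounding_counts a -> dotr a z = 0) -> is_cocycle2 (dehn_cochain z).
Proof.
move=> hz g h g3; set t := bnd3 [:: ((g, h, g3), 1)].
have : bounding_counts (count_chain t).
  have ht := cycle_homologous (bnd3_is_cycle g h g3); rewrite -/t in ht.
  eapply eq_boundary_fun; last exact: (boundary_funB (boundary_fun_bnd3 [:: ((g, h, g3), 1)]) ht).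
  by move=> x /=; ring.
move/hz; rewrite /t /count_chain /bnd3 /= !big_cons big_nil /=.
by rewrite !dotrDl !dotrZl dotr0l /dehn_cochain => e; rewrite -[RHS]e; ring.
Qed.

Lemma alpha2_injective c : is_cycle2 c ->
  (forall phi, pcocycle2 L phi -> pair2 phi c = 0) -> is_boundary2 c.
Proof.
move=> hc hphi.
case: (classic (bounding_counts (count_chain c))) => hB.
  have [d hd] := boundary_funD (cycle_homologous hc) hB.
  by exists d => x; have := hd x; rewrite subrK.
have [z [hz hnz]] := lin_closed_separate lin_closed_bounding_counts hB.
have pz : pcocycle2 L (dehn_cochain z).
  by split; [exact: pgrowth2_dehn_cochain | exact: dehn_cochain_cocycle].
by move: hnz; rewrite -pair2_dehn_cochain hphi ?eqxx.
Qed.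

Lemma dehn_relator_values phi : is_cocycle2 phi ->
  dehn_cochain (relator_values phi) = (fun g h => -1 * cobnd1 (geodesic_cochain phi) g h + phi g h).
Proof.
move=> hphi; apply: functional_extensionality => g; apply: functional_extensionality => h.
by rewrite (cocycle_decomposition g h hphi); ring.
Qed.

Lemma pcocycle2_dehn_relator_values phi : pcocycle2 L phi ->
  pcocycle2 L (dehn_cochain (relator_values phi)).
Proof.
move=> [pg pc]; rewrite dehn_relator_values //; apply: pcocycle2_lin => //.
apply: pcoboundary2_pcocycle2; first exact: L_mulg.
by exists (geodesic_cochain phi); split => //; exact: pgrowth1_geodesic_cochain.
Qed.

Lemma PH2_functional_relator_values Lam phi : PH2_functional L Lam -> pcocycle2 L phi ->
  Lam phi = Lam (dehn_cochain (relator_values phi)).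
Proof.
move=> [hlin hcob] hphi.
have pcob : pcoboundary2 L (cobnd1 (geodesic_cochain phi)).
  by exists (geodesic_cochain phi); split => //; exact: pgrowth1_geodesic_cochain hphi.1.
have := hlin 1 _ _ (pcocycle2_dehn_relator_values hphi) (pcoboundary2_pcocycle2 L_mulg pcob).
rewrite (hcob _ pcob) mul1r addr0 => <-; congr (Lam _).
apply: functional_extensionality => g; apply: functional_extensionality => h.
by rewrite (cocycle_decomposition g h hphi.2) mul1r.
Qed.

Definition pcocycle_values (v : 'rV[rat]_m) := exists phi, pcocycle2 L phi /\ relator_values phi = v.

Definition cycle_counts (x : 'rV[rat]_m) := exists c, is_cycle2 c /\ count_chain c = x.

Lemma lin_closed_pcocycle_values : lin_closed pcocycle_values.
Proof.
split.
  exists (fun _ _ => 0); split.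
    split; last by move=> ? ? ?; rewrite !(subr0, addr0).
    by exists 0, 0%N => g h; rewrite normr0 mul0r.
  by apply/matrixP => i j; rewrite !mxE pair2E /pairing big1 // => p _; rewrite mulr0.
move=> a v1 v2 [p1 [h1 <-]] [p2 [h2 <-]].
by exists (fun g h => a * p1 g h + p2 g h); split; [exact: pcocycle2_lin | exact: relator_values_lin].
Qed.

Lemma lin_closed_cycle_counts : lin_closed cycle_counts.
Proof.
split; first by exists [::]; split; [move=> g; exact: coef_nil | rewrite /count_chain big_nil].
move=> a v1 v2 [c1 [h1 <-]] [c2 [h2 <-]].
exists (scalec a c1 ++ c2); split; last by rewrite count_chain_cat count_chain_scale.
move: h1 h2 => /is_cycle2E h1 /is_cycle2E h2; apply/is_cycle2E => g.
by rewrite bnd2_cat coef_cat coef_bnd2_scale h1 h2 mulr0 addr0.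
Qed.

Lemma alpha2_surjective Lam : PH2_functional L Lam ->
  exists c, is_cycle2 c /\ forall phi, pcocycle2 L phi -> Lam phi = pair2 phi c.
Proof.
move=> hLam; have [hlin hcob] := hLam.
have hlam (a : rat) v1 v2 : pcocycle_values v1 -> pcocycle_values v2 ->
    Lam (dehn_cochain (a *: v1 + v2)) = a * Lam (dehn_cochain v1) + Lam (dehn_cochain v2).
  move=> [p1 [h1 <-]] [p2 [h2 <-]].
  rewrite -(hlin a _ _ (pcocycle2_dehn_relator_values h1) (pcocycle2_dehn_relator_values h2)).
  congr (Lam _); apply: functional_extensionality => g; apply: functional_extensionality => h.
  by rewrite /dehn_cochain dotrDr dotrZr.
have hker v : pcocycle_values v -> (forall x, cycle_counts x -> dotr x v = 0) ->
    Lam (dehn_cochain v) = 0.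
  move=> [phi [hphi <-]] hx; rewrite -PH2_functional_relator_values //.
  apply: hcob; apply: pcoboundary2_of_cycle_orthogonal => // c hc.
  by rewrite pair2_cycle //; [apply: hx; exists c | exact: hphi.2].
have [x [[c [hc <-]] hrep]] :=
  represent_functional lin_closed_pcocycle_values lin_closed_cycle_counts hlam hker.
exists c; split => // phi hphi.
rewrite PH2_functional_relator_values // hrep; last by exists phi.
by rewrite pair2_cycle //; exact: hphi.2.
Qed.
End Presentation.

Theorem theorem2p1p3 (S : finType) (W : seq (word S)) (G : groupType)
  (gen : S -> G) (L : G -> nat) :
  presents gen W -> dehn_poly_bounded W -> is_std_length gen L ->
  alpha2_iso L.
Proof.
move=> hpres [C [k hdehn]] hstd; split=> [c|Lam].
- exact: (alpha2_injective hpres hstd hdehn).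
- exact: (alpha2_surjective hpres hstd hdehn).
Qed.
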